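(* $\mathrm{add}_{\omega}^{*}(\mathcal{S}pl)=\omega_{1}$ and $\mathrm{cof}_{\omega}^{*}(\mathcal{S}pl)=\mathfrak{c}$.
   Context: For an infinite $A\subseteq\omega$, let $S(A)$ be the set of all $\sigma\in2^{<\omega}$ such that $\sigma$ is constant on $A\cap\mathrm{dom}(\sigma)$. The splitting ideal $\mathcal{S}pl$ is the ideal on $2^{<\omega}$ generated by the sets $S(A)$, $A\in[\omega]^{\omega}$. For an ideal $\mathcal{J}$: $\mathrm{add}_{\omega}^*(\mathcal{J})=\min\{|\mathcal{F}|:\mathcal{F}\subseteq\mathcal{J}$ and for every countable $\{X_{n}:n\in\omega\}\subseteq\mathcal{J}$ there is $A\in\mathcal{F}$ with $A\not\subseteq^{*}X_{n}$ for all $n\}$; $\mathrm{cof}_{\omega}^*(\mathcal{J})=\min\{|\mathcal{F}|:\mathcal{F}\subseteq[\mathcal{J}]^{\omega}$ and for every countable $\bar{A}\subseteq\mathcal{J}$ there is $\bar{F}\in\mathcal{F}$ such that every $A\in\bar{A}$ satisfies $A\subseteq^{*}F$ for some $F\in\bar{F}\}$. *)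

From mathcomp Require Import all_boot.
From mathcomp Require Import boolp classical_sets cardinality.
Set Implicit Arguments. Unset Strict Implicit. Unset Printing Implicit Defensive.
Local Open Scope classical_set_scope.

(* 2^{<omega} is represented by [seq bool]; sigma has domain {0,...,size sigma - 1}. *)
Notation bstr := (seq bool).

Definition S_of (A : set nat) : set bstr :=
  [set s | forall i j, (i < size s)%N -> (j < size s)%N -> A i -> A j ->
                       nth false s i = nth false s j].

(* The splitting ideal: the ideal generated by the S(A), A infinite, i.e.
   sets covered by finitely many S(A_k) with each A_k infinite. *)
Definition Spl : set (set bstr) :=
  [set X | exists (n : nat) (A : nat -> set nat),
     (forall k, (k < n)%N -> infinite_set (A k)) /\
     X `<=` \bigcup_(k in [set k | (k < n)%N]) S_of (A k)].

Definition subset_star (X Y : set bstr) : Prop := finite_set (X `\` Y).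

Definition add_star_family (J : set (set bstr)) (F : set (set bstr)) : Prop :=
  F `<=` J /\
  forall X : nat -> set bstr, (forall n, J (X n)) ->
    exists A, F A /\ forall n, ~ subset_star A (X n).

Definition cof_star_family (J : set (set bstr)) (FF : set (set (set bstr))) : Prop :=
  (forall Fb, FF Fb -> Fb `<=` J /\ countable Fb /\ infinite_set Fb) /\
  forall Ab : set (set bstr), Ab `<=` J -> countable Ab ->
    exists Fb, FF Fb /\ forall A, Ab A -> exists F, Fb F /\ subset_star A F.

(* |F| <= aleph_1 : F carries a well-order all of whose proper initial
   segments are countable. *)
Definition card_le_aleph1 T (F : set T) : Prop :=
  exists R : T -> T -> Prop,
    (forall x y, F x -> F y -> R x y \/ x = y \/ R y x) /\
    (forall x y z, F x -> F y -> F z -> R x y -> R y z -> R x z) /\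
    (forall x, F x -> ~ R x x) /\
    (forall B : set T, B `<=` F -> B !=set0 ->
        exists m, B m /\ forall y, B y -> ~ R y m) /\
    (forall x, F x -> countable [set y | F y /\ R y x]).

(* cardinality of the continuum: that of [set: nat -> bool] *)

From mathcomp Require Import all_boot.
From mathcomp Require Import boolp classical_sets cardinality.
From mathcomp Require Import wochoice zify.
Set Implicit Arguments. Unset Strict Implicit. Unset Printing Implicit Defensive.
Local Open Scope classical_set_scope.
Local Open Scope card_scope.

(* If S(A) is almost included in S(B_0) u ... u S(B_(m-1)) with every B_k
   infinite, then some B_k is included in A: otherwise the strings equal to 1
   exactly on [0, N) \ A, for N large, form an infinite set of exceptions.
   Apply this to A = b_x, where the b_x (x in 2^omega) are the branches of the
   binary tree coded into omega, an almost disjoint family: only countably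
   many S(b_x) are almost included in a given member of Spl, hence in some
   member of a given countable subfamily of Spl.  So no countable family
   witnesses add*, while omega_1 of the S(b_x) do; and a witness for cof*
   needs continuum many members, because a map on (2^omega)^omega with
   countable fibres takes continuum many values.  The bound cof* <= c holds
   since countable subfamilies of Spl are covered by families coded by
   countably many infinite subsets of omega. *)

Lemma finite_set_bounded (T : choiceType) (X : set T) (f : T -> nat) :
  finite_set X -> exists n, forall x, X x -> (f x < n)%N.
Proof.
move=> /finite_fsetP[Y ->]; exists (\max_(y <- finmap.enum_fset Y) f y).+1 => x /= xY.
by rewrite ltnS; apply: leq_bigmax_seq.
Qed.

Lemma infinite_set_unbounded (B : set nat) M :
  infinite_set B -> exists2 q, B q & (M <= q)%N.
Proof.
move=> Binf; apply: contra_notP Binf => noq.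
apply: (sub_finite_set _ (finite_II M)) => q Bq /=.
by rewrite ltnNge; apply/negP => Mq; apply: noq; exists q.
Qed.

Lemma unbounded_infinite_set (T : choiceType) (X : set T) (f : T -> nat) :
  (forall M, exists2 x, X x & (M <= f x)%N) -> infinite_set X.
Proof.
move=> unb /(finite_set_bounded f)[n Hn]; have [x Xx] := unb n.
by rewrite leqNgt Hn.
Qed.

Lemma countable_range_enum (T : Type) (J F : set T) (x0 : T) :
  J x0 -> F `<=` J -> countable F ->
  exists2 X : nat -> T, (forall n, J (X n)) & F `<=` range X.
Proof.
move=> Jx0 FJ /countable_injP[f finj].
have /choice[X HX] : forall n, exists Xn, J Xn /\ forall A, F A -> f A = n -> A = Xn.
  move=> n; have [[A [FA <-]]|noA] := pselect (exists A, F A /\ f A = n).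
    by exists A; split=> [|B FB /(finj _ _ (mem_set FB) (mem_set FA))]; [exact: FJ|].
  by exists x0; split=> // A FA fA; case: noA; exists A.
exists X; first by move=> n; have [] := HX n.
by move=> A FA; have [_ /(_ A FA erefl) XA] := HX (f A); exists (f A).
Qed.

Section CountableRank.
Variables (T : eqType) (R : rel T).
Hypothesis Rwo : well_order R.

Lemma wo_minimum (B : set T) : B !=set0 -> exists2 z, B z & forall w, B w -> R z w.
Proof.
move=> [x Bx]; have [|z [[Bz lbz] _]] := Rwo (A := [pred w | `[< B w >]]) _.
  by exists x; rewrite inE.
by exists z => [|w Bw]; [move: Bz; rewrite inE | apply: lbz; rewrite inE].
Qed.

Let Rchain : wo_chain R predT. Proof. by move=> A _; apply: Rwo. Qed.

Lemma wo_total x y : R x y || R y x.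
Proof. exact: (wo_chainW Rchain). Qed.

Lemma wo_antisym x y : R x y -> R y x -> x = y.
Proof.
by move=> Rxy Ryx; apply: (wo_chain_antisymmetric Rchain) => //; rewrite Rxy Ryx.
Qed.

Lemma wo_trans x y z : R x y -> R y z -> R x z.
Proof.
move=> Rxy Ryz.
have [|w xyz_w minw] := @wo_minimum [set w | w = x \/ w = y \/ w = z].
  by exists x; left.
have [Rwx Rwy Rwz] : [/\ R w x, R w y & R w z] by split; apply: minw => /=; tauto.
case: xyz_w => [|[|]] Ew; subst w => //.
- by rewrite (wo_antisym Rxy Rwx).
- by rewrite -(wo_antisym Ryz Rwy).
Qed.

Definition wo_lt x y := R x y /\ x <> y.

(* The initial segment of R of order type omega_1, or all of T if R is shorter. *)
Definition countably_ranked := [set x | countable [set y | wo_lt y x]].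

Lemma card_le_aleph1_countably_ranked : card_le_aleph1 countably_ranked.
Proof.
exists wo_lt; split; [|split; [|split; [|split]]].
- move=> x y _ _; have [->|xy] := pselect (x = y); first by right; left.
  by case/orP: (wo_total x y) => ?; [left | right; right]; split=> // yx; apply: xy.
- move=> x y z _ _ _ [Rxy xy] [Ryz yz]; split; first exact: wo_trans Rxy Ryz.
  by move=> xz; subst z; apply: xy; apply: wo_antisym.
- by move=> x _ [].
- move=> B _ /wo_minimum[z Bz minz]; exists z; split=> // y By [Ryz yz].
  exact/yz/wo_antisym/minz.
- by move=> x Ix; apply: sub_countable Ix; apply: subset_card_le => y [].
Qed.

Lemma countably_ranked_uncountable :
  ~ countable [set: T] -> ~ countable countably_ranked.
Proof.
move=> Tunc Icount; have [z notIz] : exists z, ~ countably_ranked z.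
  apply: contrapT => /forallNP allI; apply: Tunc; apply: sub_countable Icount.
  by apply: subset_card_le => x _; apply: contrapT; apply: allI.
have [z0 notIz0 minz0] := @wo_minimum (~` countably_ranked) (ex_intro _ z notIz).
apply: notIz0; apply: sub_countable Icount; apply: subset_card_le => y [Ryz0 yz0].
by apply: contrapT => notIy; apply/yz0/wo_antisym/minz0.
Qed.

End CountableRank.

Lemma exists_card_le_aleph1_uncountable (T : eqType) :
  ~ countable [set: T] -> exists I : set T, card_le_aleph1 I /\ ~ countable I.
Proof.
move=> Tunc; have [R Rwo] := well_ordering_principle T.
by exists (countably_ranked R); split;
  [exact: card_le_aleph1_countably_ranked | exact: countably_ranked_uncountable].
Qed.

Lemma card_le_aleph1_image (T U : Type) (f : T -> U) (I : set T) :
  injective f -> card_le_aleph1 I -> card_le_aleph1 (f @` I).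
Proof.
move=> finj [R [Rtri [Rtrans [Rirr [Rmin Rcount]]]]].
pose Rf Y Z := exists x y, [/\ Y = f x, Z = f y & R x y].
have RfE x y : Rf (f x) (f y) <-> R x y.
  by split=> [[x' [y' [/finj-> /finj-> //]]]|Rxy]; exists x, y.
exists Rf; split; [|split; [|split; [|split]]].
- move=> _ _ [x Ix <-] [y Iy <-]; rewrite !RfE.
  by case: (Rtri x y Ix Iy) => [|[->|]]; auto.
- move=> _ _ _ [x Ix <-] [y Iy <-] [z Iz <-]; rewrite !RfE; exact: Rtrans.
- by move=> _ [x Ix <-]; rewrite RfE; apply: Rirr.
- move=> B BfI [_ /[dup] /BfI [x0 Ix0 <-] Bx0].
  have [x [[Ix Bfx] minx]] :
      exists x, [set x | I x /\ B (f x)] x /\ forall y, I y /\ B (f y) -> ~ R y x.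
    by apply: Rmin; [move=> x [] | exists x0].
  exists (f x); split=> // _ /[dup] /BfI [y Iy <-] Bfy; rewrite RfE; exact: minx.
- move=> _ [x Ix <-]; apply: sub_countable (Rcount x Ix).
  apply: card_le_trans (card_image_le f _); apply: subset_card_le.
  by move=> _ [[y Iy <-] /RfE Ryx]; exists y.
Qed.

Lemma card_le_range_countable_fibres (X : Type) (Y : pointedType) (g : (nat -> X) -> Y) :
  (forall y, countable (g @^-1` [set y])) -> [set: X] #<= range g.
Proof.
move=> gfib; have /choice[idx idx_inj] : forall y, exists idx : (nat -> X) -> nat,
    {in g @^-1` [set y] &, injective idx}.
  by move=> y; apply/countable_injP.
pose nu z := idx (g z) z.
(* Diagonal argument: otherwise choose [d n] missed at coordinate n by every z
   with [nu z = n], and look at z := d and n := nu d. *)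
have [n surj_n] : exists n, forall x, exists z, nu z = n /\ z n = x.
  apply: contrapT => /forallNP no_n.
  have /choice[d dP] : forall n, exists x, forall z, nu z = n -> z n <> x.
    move=> n; have /existsNP[x xP] := no_n n.
    by exists x => z zn znx; apply: xP; exists z.
  exact: dP (nu d) d erefl erefl.
have /choice[zx zxP] := surj_n.
apply/pcard_leP/injfunPex; exists (g \o zx) => [x _|x1 x2 _ _ /= Eg].
  by exists (zx x).
have [[nu1 e1] [nu2 e2]] := (zxP x1, zxP x2).
rewrite -e1 -e2; congr (_ n); apply: (idx_inj (g (zx x1))); rewrite ?inE //=.
by move: nu1 nu2; rewrite /nu -Eg => -> ->.
Qed.

Lemma uncountable_cantor : ~ countable [set: nat -> bool].
Proof.
(* A constant map would have a single, countable fibre. *)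
move=> cantor_countable.
have : [set: bool] #<= range (fun _ : nat -> bool => true).
  apply: card_le_range_countable_fibres => y.
  by apply: sub_countable cantor_countable; apply: subset_card_le.
move=> /pcard_leP/injfunPex[f f_fun f_inj].
have [[_ _ fT] [_ _ fF]] := (f_fun true I, f_fun false I).
by have := f_inj true false (mem_set I) (mem_set I); rewrite -fT -fF => /(_ erefl).
Qed.

Definition recode (K : countType) (f : K -> bool) : nat -> bool :=
  fun p => if unpickle p is Some k then f k else false.

Lemma recode_inj (K : countType) : injective (@recode K).
Proof.
move=> f1 f2 E; apply: funext => k.
by have := congr1 (fun g => g (pickle k)) E; rewrite /recode /= pickleK.
Qed.

Lemma subset_subset_star (X Y : set bstr) : X `<=` Y -> subset_star X Y.
Proof.
move=> XY; apply: (sub_finite_set _ (finite_set0 bstr)) => s [Xs nYs].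
exact/nYs/XY.
Qed.

Lemma subset_star_trans (X Y Z : set bstr) :
  subset_star X Y -> Y `<=` Z -> subset_star X Z.
Proof. by move=> XY YZ; apply: sub_finite_set XY => s [Xs nZs]; split=> // /YZ. Qed.

Lemma add_star_family_not_countable (J : set (set bstr)) (F : set (set bstr)) :
  J set0 -> add_star_family J F -> ~ countable F.
Proof.
move=> J0 [FJ addF] /(countable_range_enum J0 FJ)[X XJ FX].
have [A [FA notA]] := addF X XJ; have [n _ XnA] := FX A FA.
by apply: (notA n); rewrite XnA; apply: subset_subset_star.
Qed.

Definition Scover (m : nat) (B : nat -> set nat) : set bstr :=
  \bigcup_(k in [set k | (k < m)%N]) S_of (B k).

Lemma SplP (X : set bstr) :
  Spl X <-> exists m (B : nat -> set nat),
    (forall k, infinite_set (B k)) /\ X `<=` Scover m B.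
Proof.
split=> [[m [B [Binf XB]]]|[m [B [Binf XB]]]]; last by exists m, B.
exists m, (fun k => if (k < m)%N then B k else setT); split.
  by move=> k; case: ifPn => [/Binf|_]; last exact: infinite_nat.
by move=> s /XB[k /= km Bs]; exists k; rewrite //= km.
Qed.

Lemma Spl0 : Spl set0.
Proof. by exists 0%N, (fun=> set0); split. Qed.

Lemma subset_star_S_of_Scover (A : set nat) m (B : nat -> set nat) :
  (forall k, (k < m)%N -> infinite_set (B k)) ->
  subset_star (S_of A) (Scover m B) -> exists2 k, (k < m)%N & B k `<=` A.
Proof.
move=> Binf finAB; apply: contrapT => noB.
have /choice[p Hp] : forall k, exists p, (k < m)%N -> B k p /\ ~ A p.
  move=> k; have [km|_] := ltnP k m; last by exists 0%N.
  have /existsNP[p /not_implyP[Bp nAp]] : ~ B k `<=` A by move=> BA; apply: noB; exists k.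
  by exists p.
have [N0 ltpN0] := finite_set_bounded p (finite_II m).
have /choice[q Hq] : forall k, exists q, (k < m)%N -> B k q /\ (N0 <= q)%N.
  move=> k; have [km|_] := ltnP k m; last by exists 0%N.
  by have [q] := infinite_set_unbounded N0 (Binf k km); exists q.
have [N1 ltqN1] := finite_set_bounded q (finite_II m).
(* [sigma L] vanishes on A but takes both values on each B k, at p k and q k. *)
pose sigma L := mkseq (fun i => (i < N0)%N && ~~ `[< A i >]) L.
have sigmaA L : S_of A (sigma L).
  move=> i j; rewrite size_mkseq => iL jL Ai Aj.
  by rewrite !nth_mkseq // (asboolT Ai) (asboolT Aj) !andbF.
have sigmaB L k : (N1 <= L)%N -> (k < m)%N -> ~ S_of (B k) (sigma L).
  move=> N1L km /(_ (p k) (q k)); rewrite size_mkseq.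
  have [[Bp nAp] [Bq N0q]] := (Hp k km, Hq k km).
  have pL : (p k < L)%N by have := ltpN0 k km; have := ltqN1 k km; lia.
  have qL : (q k < L)%N by have := ltqN1 k km; lia.
  rewrite !nth_mkseq // ltpN0 // (asboolF nAp) (leq_gtF N0q).
  by move=> /(_ pL qL Bp Bq).
apply: (unbounded_infinite_set (f := size)) finAB => M.
exists (sigma (maxn M N1)); last by rewrite size_mkseq leq_maxl.
by split=> [|[k /= km]]; [exact: sigmaA | apply: sigmaB; rewrite ?leq_maxr].
Qed.

Definition branch (x : nat -> bool) : set nat := range (fun n => pickle (mkseq x n)).

Lemma infinite_branch x : infinite_set (branch x).
Proof.
apply: (unbounded_infinite_set
  (f := fun p => if @unpickle (seq bool) p is Some s then size s else 0%N)) => M.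
by exists (pickle (mkseq x M)); [exists M | rewrite pickleK size_mkseq].
Qed.

Lemma finite_branchI x y : x <> y -> finite_set (branch x `&` branch y).
Proof.
move=> xy; have [d xyd] : exists d, x d <> y d.
  by apply: contra_notP xy => /forallNP eq_xy; apply: funext => d; apply: contrapT.
apply: (sub_finite_set _ (finite_image (fun n => pickle (mkseq x n)) (finite_II d.+1))).
move=> _ [[n _ <-] [n' _ /(pcan_inj pickleK) Exy]].
have nn : n' = n by have := congr1 size Exy; rewrite !size_mkseq.
subst n'; exists n => //=; rewrite ltnS leqNgt; apply/negP => dn; apply: xyd.
by have := congr1 (nth false ^~ d) Exy; rewrite /= !nth_mkseq.
Qed.

Lemma eq_branch_infinite_sub x y (B : set nat) :
  infinite_set B -> B `<=` branch x -> B `<=` branch y -> x = y.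
Proof.
move=> Binf Bx By; apply: contra_notP Binf => xy.
by apply: sub_finite_set (finite_branchI xy) => b Bb; split; [apply: Bx | apply: By].
Qed.

Definition Sbranch x := S_of (branch x).

Lemma Spl_Sbranch x : Spl (Sbranch x).
Proof.
exists 1%N, (fun=> branch x); split=> [k _|s Hs]; first exact: infinite_branch.
by exists 0%N.
Qed.

Lemma Sbranch_inj : injective Sbranch.
Proof.
move=> x y Exy; have : subset_star (Sbranch x) (Scover 1 (fun=> branch y)).
  by apply: subset_subset_star => s; rewrite Exy => ys; exists 0%N.
case/subset_star_S_of_Scover => [k _|k _ yx]; first exact: infinite_branch.
exact: eq_branch_infinite_sub (@infinite_branch y) yx (subset_refl _).
Qed.

Lemma countable_subset_star_Sbranch (F : set bstr) :
  Spl F -> countable [set x | subset_star (Sbranch x) F].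
Proof.
move=> [m [B [Binf FB]]].
apply: (sub_countable (B := \bigcup_(k in `I_m) [set x | B k `<=` branch x])).
  apply: subset_card_le => x /= /subset_star_trans/(_ FB).
  by case/(subset_star_S_of_Scover Binf) => k; exists k.
apply: bigcup_countable => // k km; apply/countable_injP; exists (fun=> 0%N).
by move=> x y /set_mem Bx /set_mem By _; exact: eq_branch_infinite_sub (Binf k km) Bx By.
Qed.

Lemma countable_subset_star_Sbranch_family (Fb : set (set bstr)) :
  Fb `<=` Spl -> countable Fb ->
  countable [set x | exists2 F, Fb F & subset_star (Sbranch x) F].
Proof.
move=> FbSpl Fb_count.
apply: (@sub_countable _ _ _ (\bigcup_(F in Fb) [set x | subset_star (Sbranch x) F])).
  by apply: subset_card_le => x [F FbF xF]; exists F.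
by apply: bigcup_countable => // F /FbSpl; apply: countable_subset_star_Sbranch.
Qed.

Lemma add_star_family_Spl_aleph1 : exists F, add_star_family Spl F /\ card_le_aleph1 F.
Proof.
have [I [I_aleph1 I_unc]] := exists_card_le_aleph1_uncountable uncountable_cantor.
exists (Sbranch @` I); split; last exact: card_le_aleph1_image Sbranch_inj I_aleph1.
split=> [_ [x _ <-]|X XSpl]; first exact: Spl_Sbranch.
pose bad := [set x | exists2 F, range X F & subset_star (Sbranch x) F].
have bad_countable : countable bad.
  apply: countable_subset_star_Sbranch_family; first by move=> _ [n _ <-].
  exact: sub_countable (card_image_le _ _) (countableP _).
have [x Ix not_bad] : exists2 x, I x & ~ bad x.
  apply: contrapT => no_x; apply: I_unc; apply: sub_countable bad_countable.
  by apply: subset_card_le => x Ix; apply: contrapT => not_bad; apply: no_x; exists x.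
by exists (Sbranch x); split=> [|n Xn]; [exists x | apply: not_bad; exists (X n)].
Qed.

Definition infinite_codes : set (nat -> nat -> set nat) :=
  [set c | forall n k, infinite_set (c n k)].

(* The sets [Sbranch (eqn n)] only serve to make the family infinite. *)
Definition cof_family (c : nat -> nat -> set nat) : set (set bstr) :=
  range (fun p : nat * nat + nat =>
    match p with inl (n, m) => Scover m (c n) | inr n => Sbranch (eqn n) end).

Lemma cof_star_family_Spl : cof_star_family Spl (cof_family @` infinite_codes).
Proof.
split.
  move=> _ [c c_inf <-]; split; [|split].
  - move=> _ [[[n m]|n] _ <-]; last exact: Spl_Sbranch.
    by exists m, (c n); split=> // k _.
  - exact: sub_countable (card_image_le _ _) (countableP _).
  - apply: (sub_infinite_set (A := range (fun n => Sbranch (eqn n)))).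
      by move=> _ [n _ <-]; exists (inr n).
    apply/infiniteP/pcard_leP/injfunPex; exists (fun n => Sbranch (eqn n)).
      by move=> n _; exists n.
    move=> n1 n2 _ _ /Sbranch_inj/(congr1 (fun x => x n1)).
    by rewrite /= eqnE eqxx => /esym/eqP.
move=> Ab AbSpl /(countable_range_enum Spl0 AbSpl)[X XSpl AbX].
have /choice[mB mBP] : forall n, exists mB : nat * (nat -> set nat),
    (forall k, infinite_set (mB.2 k)) /\ X n `<=` Scover mB.1 mB.2.
  by move=> n; have /SplP[m [B]] := XSpl n; exists (m, B).
exists (cof_family (fun n => (mB n).2)); split.
  by exists (fun n => (mB n).2) => // n k; have [] := mBP n.
move=> A /AbX[n _ <-]; exists (Scover (mB n).1 (mB n).2).
split; first by exists (inl (n, (mB n).1)).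
by apply: subset_subset_star; have [] := mBP n.
Qed.

Lemma card_cof_family_codes_le : cof_family @` infinite_codes #<= [set: nat -> bool].
Proof.
apply: card_le_trans (card_image_le _ _) _; apply/pcard_injP.
exists (fun c => recode (fun t : nat * nat * nat => `[< c t.1.1 t.1.2 t.2 >])).
move=> c1 c2 _ _ /recode_inj E; apply/funext => n; apply/funext => k; apply/funext => i.
by apply: propext; apply: asbool_eq_equiv; have := congr1 (fun f => f (n, k, i)) E.
Qed.

Definition pair_code (z : nat -> nat -> bool) : nat -> bool :=
  recode (fun ab : nat * nat => z ab.1 ab.2).

Lemma pair_code_inj : injective pair_code.
Proof.
move=> z1 z2 /recode_inj E; apply/funext => a; apply/funext => b.
exact: (congr1 (fun f => f (a, b)) E).
Qed.

Lemma continuum_le_cof_star_family_Spl (FF : set (set (set bstr))) :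
  cof_star_family Spl FF -> [set: nat -> bool] #<= FF.
Proof.
move=> [FF_count FF_cov].
have /choice[g gP] : forall z, exists Fb,
    FF Fb /\ exists2 F, Fb F & subset_star (Sbranch (pair_code z)) F.
  move=> z; have [|Fb [FFb /(_ _ erefl)[F [FbF zF]]]] :=
    FF_cov [set Sbranch (pair_code z)] _ (countable1 _).
    by move=> _ ->; apply: Spl_Sbranch.
  by exists Fb; split=> //; exists F.
have countable_fibre Fb : countable (g @^-1` [set Fb]).
  have [[z0 _ <-]|not_range] := pselect (range g Fb); last first.
    suff -> : g @^-1` [set Fb] = set0 by [].
    by apply/seteqP; split=> // z /= gz; apply: not_range; exists z.
  have [g0_Spl [g0_count _]] := FF_count _ (proj1 (gP z0)).
  pose handled := [set x | exists2 F, g z0 F & subset_star (Sbranch x) F].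
  apply: (@sub_countable _ _ _ (pair_code @^-1` handled)).
    by apply: subset_card_le => z /= gz; have [_] := gP z; rewrite gz.
  apply: sub_countable (countable_subset_star_Sbranch_family g0_Spl g0_count).
  by apply: card_ge_preimage => z1 z2 _ _; apply: pair_code_inj.
apply: card_le_trans (card_le_range_countable_fibres countable_fibre) _.
by apply: subset_card_le => _ [z _ <-]; have [] := gP z.
Qed.

Theorem mainTheorem14 :
  (* add*_omega(Spl) = omega_1 *)
  ((exists F, add_star_family Spl F /\ card_le_aleph1 F) /\
   (forall F, add_star_family Spl F -> ~ countable F)) /\
  (* cof*_omega(Spl) = continuum *)
  ((exists FF, cof_star_family Spl FF /\ (FF #<= [set: nat -> bool])) /\
   (forall FF, cof_star_family Spl FF -> [set: nat -> bool] #<= FF)).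
Proof.
split; split.
- exact: add_star_family_Spl_aleph1.
- by move=> F; apply: add_star_family_not_countable Spl0.
- exists (cof_family @` infinite_codes).
  by split; [exact: cof_star_family_Spl | exact: card_cof_family_codes_le].
- exact: continuum_le_cof_star_family_Spl.
Qed.
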